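(* Let $H$ be a Heyting algebra, let $I$ be a finite set and let $\Pi=\{(a_i,b_i)\mid i\in I\}$ be a family of pairs of elements of $H$. Define $\phi_\Pi:H\to H$ by $\phi_\Pi(x)=\bigvee_{i\in I}((x\to a_i)\to b_i)$. Then $\phi_\Pi$ converges to its least fixed point in $3$ steps, i.e. $\phi_\Pi^4(\bot)=\phi_\Pi^3(\bot)$, so $\phi_\Pi^3(\bot)$ is the least fixed point of $\phi_\Pi$.
   Context: $\phi_\Pi^n$ denotes the $n$-fold composite of $\phi_\Pi$ with itself; $\bot$ is the least element of $H$. *)

From HB Require Import structures.
From mathcomp Require Import all_boot all_order.
Set Implicit Arguments. Unset Strict Implicit. Unset Printing Implicit Defensive.
Import Order.TTheory.
Local Open Scope order_scope.

Definition heyting_imp (d : Order.disp_t) (H : tbLatticeType d)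
  (imp : H -> H -> H) : Prop :=
  forall x a b : H, (x `&` a <= b) = (x <= imp a b).

Definition phiPi (d : Order.disp_t) (H : tbLatticeType d) (imp : H -> H -> H)
  (I : finType) (a b : I -> H) (x : H) : H :=
  \join_(i : I) imp (imp x (a i)) (b i).

From HB Require Import structures.
From mathcomp Require Import all_boot all_order.
Set Implicit Arguments. Unset Strict Implicit. Unset Printing Implicit Defensive.
Import Order.TTheory.
Local Open Scope order_scope.

(* Write [psi_i x = (x -> a_i) -> b_i], so that [phi x = \/_i psi_i x].  Since
   [b_i <= psi_i x], already [x1 := phi bot] bounds every [b_i].  For any such
   [x1] and [x2 := phi x1], an element below [x2 -> a_j], [a_j -> b_j] and some
   [psi_k x2] lies below [x2] (hence below [a_j]): meeting it with [x2] lands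
   below [b_j <= x1], which with [x1 -> a_k] yields [x2 -> a_k] and then [b_k].
   Distributing over the join [x3 := phi x2] this gives
   [psi_j x3 /\ (x2 -> a_j) /\ x3 <= a_j], i.e. [psi_j x3 <= psi_j x2 <= x3],
   so [phi x3 <= x3]: the chain [phi^n bot] is stationary from [n = 3]. *)

Section IterFromBottom.
Variables (d : Order.disp_t) (T : bPOrderType d) (f : T -> T).
Hypothesis f_homo : {homo f : x y / x <= y}.

Lemma iter_bot_homo n : iter n f \bot <= iter n.+1 f \bot.
Proof. by elim: n => [|n IHn] /=; [exact: le0x | exact: f_homo]. Qed.

Lemma iter_bot_le_fixpoint y n : f y = y -> iter n f \bot <= y.
Proof.
move=> fy; elim: n => [|n IHn] /=; first exact: le0x.
by rewrite -fy f_homo.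
Qed.

End IterFromBottom.

Section Residuation.
Variables (d : Order.disp_t) (H : tbLatticeType d) (imp : H -> H -> H).
Hypothesis himp : heyting_imp imp.

Lemma meet_imp_le a b : imp a b `&` a <= b.
Proof. by rewrite himp. Qed.

Lemma le_imp_mp x a b : x <= a -> x <= imp a b -> x <= b.
Proof. by move=> xa xab; apply: le_trans (meet_imp_le a b); rewrite lexI xab xa. Qed.

Lemma le_imp a b : b <= imp a b.
Proof. by rewrite -himp leIl. Qed.

Lemma le_impl a a' c : a <= a' -> imp a' c <= imp a c.
Proof. by move=> aa'; rewrite -himp (le_trans _ (meet_imp_le a' c)) ?leI2. Qed.

Lemma meet_joins_le (I : finType) (g : I -> H) x y :
  (forall i, x `&` g i <= y) -> x `&` \join_i g i <= y.
Proof.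
move=> xgy; rewrite meetC himp; apply/joinsP => i _.
by rewrite -himp meetC.
Qed.

Section PhiPi.
Variables (I : finType) (a b : I -> H).
Let psi i x := imp (imp x (a i)) (b i).
Let phi := phiPi imp a b.

Lemma psi_le_phi i x : psi i x <= phi x.
Proof. exact: (@joins_sup _ _ _ i xpredT (fun i => psi i x)). Qed.

Lemma b_le_phi i x : b i <= phi x.
Proof. exact: le_trans (le_imp _ _) (psi_le_phi i x). Qed.

Lemma phi_homo : {homo phi : x y / x <= y}.
Proof.
move=> x y xy; apply/joinsP => i _.
by apply: le_trans (psi_le_phi i y); do 2 apply: le_impl.
Qed.

Section ThirdIterate.
Variable x1 : H.
Hypothesis b_le_x1 : forall i, b i <= x1.
Let x2 := phi x1.
Let x3 := phi x2.

Lemma le_a_of_psi_x2 j k y :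
  y <= imp x2 (a j) -> y <= imp (a j) (b j) -> y <= psi k x2 -> y <= a j.
Proof.
move=> yQ yE yG; apply: (le_imp_mp _ yQ).
apply: le_trans (psi_le_phi k x1); rewrite -himp.
set z := y `&` _.
have zy : z <= y by exact: leIl.
apply: (le_imp_mp _ (le_trans zy yG)); rewrite -himp.
have zx2_x1 : z `&` x2 <= x1.
  apply: le_trans (b_le_x1 j).
  have zx2_y : z `&` x2 <= y by exact: le_trans (leIl _ _) zy.
  apply: (le_imp_mp _ (le_trans zx2_y yE)).
  exact: le_imp_mp (leIr _ _) (le_trans zx2_y yQ).
exact: le_imp_mp zx2_x1 (le_trans (leIl _ _) (leIr _ _)).
Qed.

Lemma phi_x3_le : phi x3 <= x3.
Proof.
apply/joinsP => j _; apply: le_trans (psi_le_phi j x2).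
set h := psi j x3.
have hE : h <= imp (a j) (b j) by apply: le_impl; exact: le_imp.
rewrite -himp; apply: (le_imp_mp _ (leIl h _)); rewrite -himp.
apply: meet_joins_le => k; apply: le_a_of_psi_x2 (leIr _ _).
- exact: le_trans (leIl _ _) (leIr _ _).
- exact: le_trans (leIl _ _) (le_trans (leIl _ _) hE).
Qed.

End ThirdIterate.

End PhiPi.

End Residuation.

Theorem mainTheorem2 (d : Order.disp_t) (H : tbLatticeType d)
  (imp : H -> H -> H) (himp : heyting_imp imp)
  (I : finType) (a b : I -> H) :
  iter 4 (phiPi imp a b) \bot = iter 3 (phiPi imp a b) \bot /\
  (forall y : H, phiPi imp a b y = y -> iter 3 (phiPi imp a b) \bot <= y).
Proof.
have phi_homo := phi_homo himp a b.
split; last by move=> y; exact: iter_bot_le_fixpoint.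
apply/le_anti; rewrite iter_bot_homo // andbT.
exact: phi_x3_le (fun i => b_le_phi himp a b i \bot).
Qed.
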